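(* Let $\mathcal Y\subseteq\mathcal C$ be a contravariantly finite subcategory which is closed under extensions and direct summands, and let $\mathcal X=\mathcal Y^{\perp_1}$. Then $\mathcal X$ is a covariantly finite subcategory of $\mathcal C$ which is closed under extensions and direct summands.
   Context: $(\mathcal C,\mathbb E,\mathfrak s)$ is an extriangulated category in the sense of Nakaoka–Palu, whose underlying additive category is Krull–Schmidt, and which has enough projectives and enough injectives (projective $P$: $\mathbb E(P,-)=0$; injective $I$: $\mathbb E(-,I)=0$; every object is the third term of an $\mathbb E$-triangle with projective middle term and the first term of one with injective middle term). All subcategories are full additive subcategories closed under isomorphisms. A subcategory is closed under extensions if for every $\mathbb E$-triangle $A\to B\to C\dashrightarrow$ with $A,C$ in it, $B$ is in it. For a subcategory $\mathcal X$, ${}^{\perp_1}\mathcal X=\{Y\in\mathcal C:\mathbb E(Y,X)=0\ \forall X\in\mathcal X\}$ and $\mathcal X^{\perp_1}=\{Y\in\mathcal C:\mathbb E(X,Y)=0\ \forall X\in\mathcal X\}$. Covariantly/contravariantly finite means every object has a left/right approximation by the subcategory. *)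

From HB Require Import structures.
From mathcomp Require Import all_boot all_algebra.

Set Implicit Arguments.
Unset Strict Implicit.
Unset Printing Implicit Defensive.

Import GRing.Theory.
Local Open Scope ring_scope.

Record PreAddCat := {
  obj :> Type;
  hom : obj -> obj -> zmodType;
  comp : forall {a b c : obj}, hom b c -> hom a b -> hom a c;
  idm : forall a : obj, hom a a;
  compA : forall a b c d (h : hom c d) (g : hom b c) (f : hom a b),
      comp h (comp g f) = comp (comp h g) f;
  comp1m : forall a b (f : hom a b), comp (idm b) f = f;
  compm1 : forall a b (f : hom a b), comp f (idm a) = f;
  compDl : forall a b c (g g' : hom b c) (f : hom a b),
      comp (g + g') f = comp g f + comp g' f;
  compDr : forall a b c (g : hom b c) (f f' : hom a b),
      comp g (f + f') = comp g f + comp g f'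
}.

Arguments comp {C a b c} : rename.
Arguments idm {C} : rename.

Section PreAddDefs.
Variable C : PreAddCat.

Definition isIso (a b : C) (f : hom a b) : Prop :=
  exists g : hom b a, comp g f = idm a /\ comp f g = idm b.

Definition is_zero_obj (z : C) : Prop := idm z = 0.

Definition biprod2 (A1 A2 S : C) (p1 : hom S A1) (p2 : hom S A2)
    (e1 : hom A1 S) (e2 : hom A2 S) : Prop :=
  [/\ comp p1 e1 = idm A1, comp p2 e2 = idm A2,
      comp p1 e2 = 0, comp p2 e1 = 0 &
      comp e1 p1 + comp e2 p2 = idm S].

Definition biprodn (n : nat) (Xs : 'I_n -> C) (X : C)
    (p : forall i, hom X (Xs i)) (e : forall i, hom (Xs i) X) : Prop :=
  [/\ (forall i, comp (p i) (e i) = idm (Xs i)),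
      (forall i j, i != j -> comp (p i) (e j) = 0) &
      \sum_(i < n) comp (e i) (p i) = idm X].

Definition local_endo (X : C) : Prop :=
  idm X <> 0 /\ forall f : hom X X, isIso f \/ isIso (idm X - f).

Definition krull_schmidt : Prop :=
  forall X : C, exists (n : nat) (Xs : 'I_n -> C)
    (p : forall i, hom X (Xs i)) (e : forall i, hom (Xs i) X),
    biprodn p e /\ forall i, local_endo (Xs i).

Definition seq_equiv (A B B' D : C) (x : hom A B) (y : hom B D)
    (x' : hom A B') (y' : hom B' D) : Prop :=
  exists b : hom B B', [/\ isIso b, comp b x = x' & comp y' b = y].

End PreAddDefs.

(* Ext D A stands for E(D, A) (contravariant in D, covariant in A).     *)
(* realizes d x y  means  s(d) = [A -x-> B -y-> D].                     *)
Record ExtriCat := {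
  ecat :> PreAddCat;
  ex_zero_obj : exists Z : ecat, is_zero_obj Z;
  ex_biprod : forall A1 A2 : ecat, exists (S : ecat) (p1 : hom S A1)
     (p2 : hom S A2) (e1 : hom A1 S) (e2 : hom A2 S), biprod2 p1 p2 e1 e2;
  Ext : ecat -> ecat -> zmodType;
  push : forall {A A' D : ecat}, hom A A' -> Ext D A -> Ext D A';
  pull : forall {A D D' : ecat}, hom D' D -> Ext D A -> Ext D' A;
  pushD : forall A A' D (a : hom A A') (d d' : Ext D A),
      push a (d + d') = push a d + push a d';
  pushDm : forall A A' D (a a' : hom A A') (d : Ext D A),
      push (a + a') d = push a d + push a' d;
  pullD : forall A D D' (c : hom D' D) (d d' : Ext D A),
      pull c (d + d') = pull c d + pull c d';
  pullDm : forall A D D' (c c' : hom D' D) (d : Ext D A),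
      pull (c + c') d = pull c d + pull c' d;
  push1 : forall A D (d : Ext D A), push (idm A) d = d;
  pull1 : forall A D (d : Ext D A), pull (idm D) d = d;
  push_comp : forall A A' A'' D (a : hom A A') (b : hom A' A'') (d : Ext D A),
      push (comp b a) d = push b (push a d);
  pull_comp : forall A D D' D'' (c : hom D' D) (c' : hom D'' D') (d : Ext D A),
      pull (comp c c') d = pull c' (pull c d);
  push_pull : forall A A' D D' (a : hom A A') (c : hom D' D) (d : Ext D A),
      push a (pull c d) = pull c (push a d);
  realizes : forall {A D : ecat}, Ext D A -> forall {B : ecat},
      hom A B -> hom B D -> Prop;
  real_ex : forall A D (d : Ext D A),
      exists (B : ecat) (x : hom A B) (y : hom B D), realizes d x y;
  real_uniq : forall A B B' D (d : Ext D A) (x : hom A B) (y : hom B D)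
      (x' : hom A B') (y' : hom B' D),
      realizes d x y -> realizes d x' y' -> seq_equiv x y x' y';
  real_closed : forall A B B' D (d : Ext D A) (x : hom A B) (y : hom B D)
      (x' : hom A B') (y' : hom B' D),
      realizes d x y -> seq_equiv x y x' y' -> realizes d x' y';
  real_morph : forall A B D A' B' D' (d : Ext D A) (d' : Ext D' A')
      (x : hom A B) (y : hom B D) (x' : hom A' B') (y' : hom B' D')
      (a : hom A A') (c : hom D D'),
      realizes d x y -> realizes d' x' y' -> push a d = pull c d' ->
      exists b : hom B B', comp b x = comp x' a /\ comp y' b = comp c y;
  real_zero : forall A D S (p1 : hom S A) (p2 : hom S D) (e1 : hom A S)
      (e2 : hom D S), biprod2 p1 p2 e1 e2 -> realizes (0 : Ext D A) e1 p2;
  real_sum : forall A A' B B' D D' SA SB SD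
      (pA : hom SA A) (pA' : hom SA A') (eA : hom A SA) (eA' : hom A' SA)
      (pB : hom SB B) (pB' : hom SB B') (eB : hom B SB) (eB' : hom B' SB)
      (pD : hom SD D) (pD' : hom SD D') (eD : hom D SD) (eD' : hom D' SD)
      (d : Ext D A) (d' : Ext D' A')
      (x : hom A B) (y : hom B D) (x' : hom A' B') (y' : hom B' D'),
      biprod2 pA pA' eA eA' -> biprod2 pB pB' eB eB' ->
      biprod2 pD pD' eD eD' ->
      realizes d x y -> realizes d' x' y' ->
      realizes (push eA (pull pD d) + push eA' (pull pD' d'))
        (comp eB (comp x pA) + comp eB' (comp x' pA'))
        (comp eD (comp y pB) + comp eD' (comp y' pB'));
  ET3 : forall A B D A' B' D' (d : Ext D A) (d' : Ext D' A')
      (x : hom A B) (y : hom B D) (x' : hom A' B') (y' : hom B' D')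
      (a : hom A A') (b : hom B B'),
      realizes d x y -> realizes d' x' y' -> comp b x = comp x' a ->
      exists c : hom D D', comp c y = comp y' b /\ push a d = pull c d';
  ET3op : forall A B D A' B' D' (d : Ext D A) (d' : Ext D' A')
      (x : hom A B) (y : hom B D) (x' : hom A' B') (y' : hom B' D')
      (b : hom B B') (c : hom D D'),
      realizes d x y -> realizes d' x' y' -> comp c y = comp y' b ->
      exists a : hom A A', comp b x = comp x' a /\ push a d = pull c d';
  ET4 : forall (A B C' D F : ecat) (d : Ext D A) (f : hom A B) (f' : hom B D)
      (d' : Ext F B) (g : hom B C') (g' : hom C' F),
      realizes d f f' -> realizes d' g g' ->
      exists (E : ecat) (h : hom A C') (h' : hom C' E) (d'' : Ext E A)
        (dd : hom D E) (e : hom E F),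
        [/\ realizes d'' h h', realizes (push f' d') dd e,
            pull dd d'' = d, push f d'' = pull e d' &
            [/\ h = comp g f, comp h' g = comp dd f' & comp e h' = g']];
  ET4op : forall (A B C' D F : ecat) (d : Ext B D) (f' : hom D A) (f : hom A B)
      (d' : Ext C' F) (g' : hom F B) (g : hom B C'),
      realizes d f' f -> realizes d' g' g ->
      exists (E : ecat) (dd : hom D E) (e : hom E F) (h' : hom E A)
        (h : hom A C') (d'' : Ext C' E),
        [/\ realizes d'' h' h, realizes (pull g' d) dd e,
            d' = push e d'', push dd d = pull g d'' &
            [/\ f' = comp h' dd, comp f h' = comp g' e & h = comp g f]]
}.

Arguments push {C A A' D} : rename.
Arguments pull {C A D D'} : rename.
Arguments realizes {C A D} d {B} : rename.

Section ExtriDefs.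
Variable C : ExtriCat.

Definition projective (P : C) : Prop := forall (X : C) (d : Ext P X), d = 0.
Definition injective (I : C) : Prop := forall (X : C) (d : Ext X I), d = 0.

Definition enough_projectives : Prop :=
  forall X : C, exists (A P : C) (d : Ext X A) (x : hom A P) (y : hom P X),
    realizes d x y /\ projective P.
Definition enough_injectives : Prop :=
  forall X : C, exists (I D : C) (d : Ext D X) (x : hom X I) (y : hom I D),
    realizes d x y /\ injective I.

Definition iso_closed (P : C -> Prop) : Prop :=
  forall (A B : C) (f : hom A B), isIso f -> P A -> P B.

Definition additive_sub (P : C -> Prop) : Prop :=
  (forall Z : C, is_zero_obj Z -> P Z) /\
  (forall (A1 A2 S : C) (p1 : hom S A1) (p2 : hom S A2) (e1 : hom A1 S)
      (e2 : hom A2 S), biprod2 p1 p2 e1 e2 -> P A1 -> P A2 -> P S).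

Definition ext_closed (P : C -> Prop) : Prop :=
  forall (A B D : C) (d : Ext D A) (x : hom A B) (y : hom B D),
    realizes d x y -> P A -> P D -> P B.

Definition summand_closed (P : C -> Prop) : Prop :=
  forall (A1 A2 S : C) (p1 : hom S A1) (p2 : hom S A2) (e1 : hom A1 S)
      (e2 : hom A2 S), biprod2 p1 p2 e1 e2 -> P S -> P A1 /\ P A2.

Definition contravariantly_finite (P : C -> Prop) : Prop :=
  forall X : C, exists (Y : C) (f : hom Y X), P Y /\
    forall (Y' : C) (g : hom Y' X), P Y' -> exists h : hom Y' Y, g = comp f h.

Definition covariantly_finite (P : C -> Prop) : Prop :=
  forall X : C, exists (Y : C) (f : hom X Y), P Y /\
    forall (Y' : C) (g : hom X Y'), P Y' -> exists h : hom Y Y', g = comp h f.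

Definition perp1_right (P : C -> Prop) : C -> Prop :=
  fun Z => forall (Y : C), P Y -> forall d : Ext Y Z, d = 0.

Definition perp1_left (P : C -> Prop) : C -> Prop :=
  fun Z => forall (Y : C), P Y -> forall d : Ext Z Y, d = 0.

End ExtriDefs.

(* Extension and summand closure of [Y^perp1] follow from exactness of [E].
   For covariant finiteness of [Y^perp1], take an E-triangle [delta] :
   [X -a-> I -b-> D] with [I] injective.  Decompose a right [Y]-approximation
   of [D] into indecomposables (Krull--Schmidt) and keep a minimal set of
   summands [W] such that [(f, b) : W (+) I -> D] still approximates: then
   every [phi] with [f phi = f + b s] is invertible, because otherwise some
   entry of [1 - phi] is invertible and a summand could be dropped.  Pulling
   [delta] back along [f] gives [X -x-> M -q-> W].  As in Wakamatsu's lemma, the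
   octahedral axiom and minimality show [M] is in [Y^perp1], and [x] is a left
   approximation because [E(W, X') = 0] for [X'] in [Y^perp1]. *)

From Pilot Require Import Defs.
From HB Require Import structures.
From mathcomp Require Import all_boot all_algebra.
From Stdlib Require Import Classical.
Import Pilot.Defs. (* so that [hom] is not the one of [vector] *)

Set Implicit Arguments.
Unset Strict Implicit.
Unset Printing Implicit Defensive.
Import GRing.Theory.
Local Open Scope ring_scope.

Local Notation "g ∘ f" := (comp g f) (at level 40, left associativity).

Section AdditiveMaps.
Variables (V W : zmodType) (F : V -> W).
Hypothesis FD : {morph F : x y / x + y}.

Lemma additive_map0 : F 0 = 0.
Proof. by apply: (addrI (F 0)); rewrite -FD !addr0. Qed.

Lemma additive_mapN x : F (- x) = - F x.
Proof. by apply: (addrI (F x)); rewrite -FD !subrr additive_map0. Qed.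

Lemma additive_map_sum (I : finType) (P : pred I) (G : I -> V) :
  F (\sum_(i | P i) G i) = \sum_(i | P i) F (G i).
Proof. exact: (big_morph F FD additive_map0). Qed.

End AdditiveMaps.

Arguments additive_map0 {V W} F.
Arguments additive_mapN {V W} F.
Arguments additive_map_sum {V W} F.

Section PreAdditive.
Variable C : PreAddCat.
Implicit Types a b c : C.

Lemma comp0m a b c (f : hom a b) : (0 : hom b c) ∘ f = 0.
Proof. exact: (additive_map0 (fun g : hom b c => g ∘ f) (fun g g' => compDl g g' f)). Qed.

Lemma compm0 a b c (g : hom b c) : g ∘ (0 : hom a b) = 0.
Proof. exact: (additive_map0 (comp g) (compDr g)). Qed.

Lemma compNm a b c (g : hom b c) (f : hom a b) : (- g) ∘ f = - (g ∘ f).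
Proof. exact: (additive_mapN (fun g : hom b c => g ∘ f) (fun g g' => compDl g g' f)). Qed.

Lemma compBl a b c (g g' : hom b c) (f : hom a b) : (g - g') ∘ f = g ∘ f - g' ∘ f.
Proof. by rewrite compDl compNm. Qed.

Lemma compBr a b c (g : hom b c) (f f' : hom a b) : g ∘ (f - f') = g ∘ f - g ∘ f'.
Proof. by rewrite compDr (additive_mapN (comp g) (compDr g)). Qed.

Lemma comp_suml a b c (I : finType) (P : pred I) (G : I -> hom b c) (f : hom a b) :
  (\sum_(i | P i) G i) ∘ f = \sum_(i | P i) G i ∘ f.
Proof. exact: (additive_map_sum (fun g : hom b c => g ∘ f) (fun g g' => compDl g g' f)). Qed.

Lemma comp_sumr a b c (I : finType) (P : pred I) (G : I -> hom a b) (g : hom b c) :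
  g ∘ (\sum_(i | P i) G i) = \sum_(i | P i) g ∘ G i.
Proof. exact: (additive_map_sum (comp g) (compDr g)). Qed.

Lemma isIso_idm a : isIso (idm a).
Proof. by exists (idm a); rewrite comp1m. Qed.

Lemma isIso_comp a b c (f : hom a b) (g : hom b c) :
  isIso f -> isIso g -> isIso (g ∘ f).
Proof.
move=> [f' [f'f ff']] [g' [g'g gg']]; exists (f' ∘ g'); split.
- by rewrite compA -(compA f') g'g compm1.
- by rewrite compA -(compA g) ff' compm1.
Qed.

(* If [w] inverts [1 - y x], then [1 + x w y] inverts [1 - x y]. *)
Lemma isIso_idmB_swap a b (x : hom a b) (y : hom b a) :
  isIso (idm a - y ∘ x) -> isIso (idm b - x ∘ y).
Proof.
move=> [w [wl wr]]; exists (idm b + x ∘ w ∘ y); split.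
- have wyx : w ∘ (y ∘ x) = w - idm a.
    by rewrite -wl compBr compm1 opprB addrC subrK.
  rewrite compDl comp1m compBr compm1.
  have -> : x ∘ w ∘ y ∘ (x ∘ y) = x ∘ w ∘ y - x ∘ y.
    transitivity (x ∘ (w ∘ (y ∘ x)) ∘ y); first by rewrite !compA.
    by rewrite wyx compBr compm1 compBl.
  by rewrite opprB [X in _ + X]addrC !subrK.
- have yxw : (y ∘ x) ∘ w = w - idm a.
    by rewrite -wr compBl comp1m opprB addrC subrK.
  rewrite compDr compm1 compBl comp1m.
  have -> : x ∘ y ∘ (x ∘ w ∘ y) = x ∘ w ∘ y - x ∘ y.
    transitivity (x ∘ ((y ∘ x) ∘ w) ∘ y); first by rewrite !compA.
    by rewrite yxw compBr compm1 compBl.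
  by rewrite opprB [X in _ + X]addrC !subrK.
Qed.

Definition rad_hom a b (f : hom a b) : Prop :=
  forall g : hom b a, isIso (idm a - g ∘ f).

Lemma rad_hom0 a b : rad_hom (0 : hom a b).
Proof. by move=> g; rewrite compm0 subr0; apply: isIso_idm. Qed.

Lemma rad_hom_compl a b c (f : hom a b) (g : hom b c) : rad_hom f -> rad_hom (g ∘ f).
Proof. by move=> rf h; rewrite compA; apply: rf. Qed.

Lemma rad_homD a b (f f' : hom a b) : rad_hom f -> rad_hom f' -> rad_hom (f + f').
Proof.
move=> rf rf' g; have [v [_ vr]] := rf g.
have -> : idm a - g ∘ (f + f') = (idm a - g ∘ f) ∘ (idm a - (v ∘ g) ∘ f').
  by rewrite compBr compm1 -compA compA vr comp1m compDr opprD addrA.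
by apply: isIso_comp; [exact: rf' | exact: rf].
Qed.

Lemma rad_hom_sum a b (I : finType) (P : pred I) (F : I -> hom a b) :
  (forall i, P i -> rad_hom (F i)) -> rad_hom (\sum_(i | P i) F i).
Proof. by move=> rF; apply: big_ind; [exact: rad_hom0 | exact: rad_homD |]. Qed.

Lemma local_nonIso_rad a b (f : hom a b) :
  local_endo a -> local_endo b -> ~ isIso f -> rad_hom f.
Proof.
move=> [a_nz a_loc] [_ b_loc] f_nonIso g.
case: (a_loc (g ∘ f)) => // -[t [tl tr]].
set r := t ∘ g.
have rf : r ∘ f = idm a by rewrite /r -compA.
have ee : (f ∘ r) ∘ (f ∘ r) = f ∘ r by rewrite -compA (compA r) rf comp1m.
case: (b_loc (f ∘ r)) => -[u [ul ur]].
- have fr1 : f ∘ r = idm b by rewrite -ul -{2}ee compA ul comp1m.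
  by case: f_nonIso; exists r.
- have fr0 : f ∘ r = 0.
    by rewrite -[f ∘ r]comp1m -ul -compA compBl comp1m ee subrr compm0.
  by case: a_nz; rewrite -rf -[r ∘ f]compm1 -rf compA -(compA r f r) fr0 compm0 comp0m.
Qed.

End PreAdditive.

Section Extriangulated.
Variable C : ExtriCat.

Lemma push0 (A A' D : C) (a : hom A A') : push a (0 : Ext D A) = 0.
Proof. exact: (additive_map0 (push a) (pushD a)). Qed.

Lemma pull0 (A D D' : C) (c : hom D' D) : pull c (0 : Ext D A) = 0.
Proof. exact: (additive_map0 (pull c) (pullD c)). Qed.

Lemma pullBm (A D D' : C) (c c' : hom D' D) (d : Ext D A) :
  pull (c - c') d = pull c d - pull c' d.
Proof.
by rewrite pullDm (additive_mapN (fun c => pull c d) (fun c c' => pullDm c c' d)).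
Qed.

Lemma split_realizes_idm_inflation (A : C) :
  exists Z : C, realizes (0 : Ext Z A) (idm A) (0 : hom A Z).
Proof.
have [Z Z0] := ex_zero_obj C; exists Z.
by apply: (@real_zero _ A Z A (idm A) 0 (idm A) 0); split;
  rewrite ?comp1m ?compm0 ?comp0m ?addr0.
Qed.

Lemma split_realizes_idm_deflation (D : C) :
  exists Z : C, realizes (0 : Ext D Z) (0 : hom Z D) (idm D).
Proof.
have [Z Z0] := ex_zero_obj C; exists Z.
by apply: (@real_zero _ Z D D 0 (idm D) 0 (idm D)); split;
  rewrite ?comp1m ?compm0 ?comp0m ?add0r.
Qed.

Section Triangle.
Variables (A B D : C) (d : Ext D A) (x : hom A B) (y : hom B D).
Hypothesis dxy : realizes d x y.

Lemma push_inflation0 : push x d = 0.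
Proof.
have [Z split] := split_realizes_idm_inflation B.
have [c [_ ->]] := ET3 (a := x) (b := idm B) dxy split erefl.
exact: pull0.
Qed.

Lemma pull_deflation0 : pull y d = 0.
Proof.
have [Z split] := split_realizes_idm_deflation B.
have [a [_ <-]] := ET3op (b := idm B) (c := y) split dxy erefl.
exact: push0.
Qed.

Lemma hom_factor_inflation (W : C) (g : hom A W) :
  push g d = 0 -> exists c : hom B W, g = c ∘ x.
Proof.
move=> gd0; have [S [p1 [p2 [e1 [e2 WD]]]]] := ex_biprod W D.
have [b [bx _]] := real_morph (c := idm D) dxy (real_zero WD)
  (etrans gd0 (esym (pull0 W (idm D)))).
case: WD => p1e1 _ _ _ _.
by exists (p1 ∘ b); rewrite -compA bx compA p1e1 comp1m.
Qed.

Lemma hom_factor_deflation (V : C) (g : hom V D) :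
  pull g d = 0 -> exists s : hom V B, g = y ∘ s.
Proof.
move=> gd0; have [S [p1 [p2 [e1 [e2 AV]]]]] := ex_biprod A V.
have [b [_ yb]] := real_morph (a := idm A) (real_zero AV) dxy
  (etrans (push0 V (idm A)) (esym gd0)).
case: AV => _ p2e2 _ _ _.
by exists (b ∘ e2); rewrite compA yb -compA p2e2 compm1.
Qed.

End Triangle.

Lemma ext_factor_inflation (A B D V : C) (d : Ext D A) (x : hom A B) (y : hom B D)
    (eps : Ext V B) :
  realizes d x y -> push y eps = 0 -> exists eps0 : Ext V A, eps = push x eps0.
Proof.
move=> dxy yeps0; have [N [m [n eps_mn]]] := real_ex eps.
have [E [_ [_ [d' [dd [e [_ rdd _ xd' _]]]]]]] := ET4 dxy eps_mn.
have [s id_s] := hom_factor_deflation (g := idm V) rdd (etrans (pull1 _) yeps0).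
by exists (pull s d'); rewrite push_pull xd' -pull_comp -id_s pull1.
Qed.

Lemma ext_factor_pull (A B D V : C) (d : Ext D A) (x : hom A B) (y : hom B D)
    (eps0 : Ext V A) :
  realizes d x y -> push x eps0 = 0 -> exists g : hom V D, eps0 = pull g d.
Proof.
move=> dxy xeps0; have [N [k [l eps0_kl]]] := real_ex eps0.
have [c xc] := hom_factor_inflation eps0_kl xeps0.
have [g [_ eps0g]] := ET3 (a := idm A) (b := c) eps0_kl dxy
  (etrans (esym xc) (esym (compm1 _))).
by exists g; rewrite -eps0g push1.
Qed.

Lemma perp1_right_ext_closed (Y : C -> Prop) : ext_closed (perp1_right Y).
Proof.
move=> A B D d x y dxy AY DY Y' Y'Y eps.
have [eps0 ->] := ext_factor_inflation dxy (DY Y' Y'Y (push y eps)).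
by rewrite (AY Y' Y'Y eps0) push0.
Qed.

Lemma perp1_right_summand_closed (Y : C -> Prop) : summand_closed (perp1_right Y).
Proof.
move=> A1 A2 S p1 p2 e1 e2 [p1e1 p2e2 _ _ _] SY.
split=> Y' Y'Y eps.
- by rewrite -[eps]push1 -p1e1 push_comp (SY Y' Y'Y (push e1 eps)) push0.
- by rewrite -[eps]push1 -p2e2 push_comp (SY Y' Y'Y (push e2 eps)) push0.
Qed.

End Extriangulated.

Lemma finset_ind_setD1 (T : finType) (P : {set T} -> Prop) :
  P set0 -> (forall (S : {set T}) (i : T), i \in S -> P (S :\ i) -> P S) ->
  forall S, P S.
Proof.
move=> P0 PD1 S; move: {2}#|S| (erefl #|S|) => k.
elim: k S => [|k IH] S cardS.
  by move/eqP: cardS; rewrite cards_eq0 => /eqP ->.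
have [i iS] : exists i, i \in S by apply/set0Pn; rewrite -card_gt0 cardS.
apply: (PD1 S i iS); apply: IH.
by move: cardS; rewrite (cardsD1 i) iS add1n => -[].
Qed.

Section SubBiproduct.
Variable C : PreAddCat.
Variables (n : nat) (Xs : 'I_n -> C).

(* [p i] and [e i] are unconstrained for [i \notin S]. *)
Definition subbiprod (S : {set 'I_n}) (W : C)
    (p : forall i, hom W (Xs i)) (e : forall i, hom (Xs i) W) : Prop :=
  [/\ forall i, i \in S -> p i ∘ e i = idm (Xs i),
      forall i j, i \in S -> j \in S -> i != j -> p i ∘ e j = 0 &
      \sum_(i in S) e i ∘ p i = idm W].

Lemma biprodn_subbiprod (X : C) (p : forall i, hom X (Xs i)) e :
  biprodn p e -> subbiprod [set: 'I_n] p e.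
Proof.
move=> [pe pe0 sum_ep]; split=> [i _|i j _ _|]; [exact: pe | exact: pe0 |].
by rewrite -sum_ep; apply: eq_bigl => i; rewrite in_setT.
Qed.

Section Fixed.
Variables (S : {set 'I_n}) (W : C) (p : forall i, hom W (Xs i)) (e : forall i, hom (Xs i) W).
Hypothesis We : subbiprod S p e.

Lemma subbiprod_proj_sum (T : {set 'I_n}) (Z : C) (G : forall l, hom Z (Xs l)) k :
  T \subset S -> k \in S ->
  p k ∘ (\sum_(l in T) e l ∘ G l) = if k \in T then G k else 0.
Proof.
case: We => pe pe0 _ TS kS; rewrite comp_sumr.
have pe0T l : l \in T -> l != k -> p k ∘ (e l ∘ G l) = 0.
  by move=> lT lk; rewrite compA pe0 ?comp0m 1?eq_sym // (subsetP TS).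
case: ifP => kT; last first.
  by apply: big1 => l lT; apply: pe0T => //; apply: contraFneq kT => <-.
rewrite (big_setD1 k) //= compA pe // comp1m big1 ?addr0 // => l.
by case/setD1P => lk lT; apply: pe0T.
Qed.

Lemma subbiprod_sum_comp (T T' : {set 'I_n}) (Z Z' : C)
    (F : forall i, hom (Xs i) Z') (G : forall i, hom Z (Xs i)) :
  T \subset S -> T' \subset S ->
  (\sum_(i in T) F i ∘ p i) ∘ (\sum_(j in T') e j ∘ G j) =
  \sum_(i in T :&: T') F i ∘ G i.
Proof.
move=> TS T'S; rewrite comp_suml (big_setID T') /=.
rewrite [X in _ + X]big1 ?addr0 => [|i /setDP [iT iT']].
  apply: eq_bigr => i /setIP [iT iT'].
  by rewrite -compA subbiprod_proj_sum ?iT' // (subsetP TS).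
by rewrite -compA subbiprod_proj_sum ?(negbTE iT') ?compm0 // (subsetP TS).
Qed.

Definition rad_entries (rho : hom W W) : Prop :=
  forall i j, i \in S -> j \in S -> rad_hom (p i ∘ rho ∘ e j).

Lemma rad_entries_compl (chi rho : hom W W) : rad_entries rho -> rad_entries (chi ∘ rho).
Proof.
case: We => _ _ sum_ep rho_rad i j iS jS.
have -> : p i ∘ (chi ∘ rho) ∘ e j =
    \sum_(k in S) (p i ∘ chi ∘ e k) ∘ (p k ∘ rho ∘ e j).
  transitivity (p i ∘ chi ∘ idm W ∘ rho ∘ e j); first by rewrite compm1 !compA.
  rewrite -sum_ep comp_sumr !comp_suml.
  by apply: eq_bigr => k _; rewrite !compA.
by apply: rad_hom_sum => k kS; apply/rad_hom_compl/rho_rad.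
Qed.

(* Strip the columns of [rho] one at a time: each step is an instance of
   [isIso_idmB_swap] with a radical endomorphism of a single [Xs j]. *)
Lemma isIso_idmB_rad_columns (rho : hom W W) (T : {set 'I_n}) :
  rad_entries rho -> T \subset S -> isIso (idm W - \sum_(j in T) rho ∘ e j ∘ p j).
Proof.
move=> rho_rad; elim/finset_ind_setD1: T => [_|T j jT IH TS].
  by rewrite big_set0 subr0; apply: isIso_idm.
have jS : j \in S := subsetP TS j jT.
have [V [Vl Vr]] := IH (subset_trans (subD1set T j) TS).
set U := idm W - \sum_(k in T :\ j) rho ∘ e k ∘ p k.
have -> : idm W - \sum_(k in T) rho ∘ e k ∘ p k = U ∘ (idm W - (V ∘ rho ∘ e j) ∘ p j).
  rewrite (big_setD1 j) //= compBr compm1 !compA Vr comp1m.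
  by rewrite /U opprD addrA addrAC.
apply: isIso_comp; last by exists V.
apply: isIso_idmB_swap.
by have := rad_entries_compl V rho_rad jS jS (idm _); rewrite comp1m !compA.
Qed.

Lemma isIso_idmB_rad_entries (rho : hom W W) : rad_entries rho -> isIso (idm W - rho).
Proof.
move=> rho_rad; have := isIso_idmB_rad_columns rho_rad (subxx S).
case: We => _ _ sum_ep.
suff -> : \sum_(j in S) rho ∘ e j ∘ p j = rho by [].
by rewrite -[RHS]compm1 -sum_ep comp_sumr; apply: eq_bigr => j _; rewrite compA.
Qed.

End Fixed.

Lemma subbiprod_complement (X : C) (p : forall i, hom X (Xs i)) e (S : {set 'I_n})
    (W : C) (pS : forall i, hom W (Xs i)) eS (W' : C) (pT : forall i, hom W' (Xs i)) eT :
  subbiprod [set: 'I_n] p e -> subbiprod S pS eS -> subbiprod (~: S) pT eT ->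
  biprod2 (\sum_(i in S) eS i ∘ p i) (\sum_(i in ~: S) eT i ∘ p i)
          (\sum_(i in S) e i ∘ pS i) (\sum_(i in ~: S) e i ∘ pT i).
Proof.
move=> Xe We W'e; have sub := subsetT.
split.
- by rewrite (subbiprod_sum_comp Xe) // setIid; case: We.
- by rewrite (subbiprod_sum_comp Xe) // setIid; case: W'e.
- by rewrite (subbiprod_sum_comp Xe) // setICr big_set0.
- by rewrite (subbiprod_sum_comp Xe) // setIC setICr big_set0.
- rewrite (subbiprod_sum_comp We) // (subbiprod_sum_comp W'e) // !setIid.
  by case: Xe => _ _ <-; rewrite [RHS](big_setID S) setTI setTD.
Qed.

End SubBiproduct.

Section SubBiproductExists.
Variable C : ExtriCat.
Variables (n : nat) (Xs : 'I_n -> C).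

Lemma subbiprod_exists (S : {set 'I_n}) :
  exists (W : C) (p : forall i, hom W (Xs i)) (e : forall i, hom (Xs i) W),
    subbiprod S p e.
Proof.
elim/finset_ind_setD1: S => [|S i iS [W' [p' [e' [p'e' p'e'0 sum_e'p']]]]].
  have [Z Z0] := ex_zero_obj C.
  by exists Z, (fun=> 0), (fun=> 0); split=> [i|i j|]; rewrite ?in_set0 // big_set0 Z0.
have [V [q1 [q2 [r1 [r2 [q1r1 q2r2 q1r2 q2r1 sum_rq]]]]]] := ex_biprod (Xs i) W'.
have inSD1 k : k \in S -> i != k -> k \in S :\ i by rewrite in_setD1 eq_sym => -> ->.
exists V, (dfwith (fun k => p' k ∘ q2) q1), (dfwith (fun k => r2 ∘ e' k) r1); split.
- move=> j jS; case: (eqVneq i j) => [<-|ij]; first by rewrite !dfwith_in.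
  by rewrite !dfwith_out // -compA (compA q2) q2r2 comp1m p'e' ?inSD1.
- move=> j l jS lS jl.
  case: (eqVneq i j) => [ij|ij]; case: (eqVneq i l) => [il|il].
  + by rewrite -ij -il eqxx in jl.
  + by case: j / ij {jS jl}; rewrite dfwith_in dfwith_out // compA q1r2 comp0m.
  + by case: l / il {lS jl}; rewrite dfwith_in dfwith_out // -compA q2r1 compm0.
  + by rewrite !dfwith_out // -compA (compA q2) q2r2 comp1m p'e'0 ?inSD1.
- rewrite (big_setD1 i) //= !dfwith_in -[RHS]sum_rq; congr (_ + _).
  rewrite -[in RHS](compm1 r2) -sum_e'p' comp_sumr comp_suml.
  apply: eq_bigr => k; rewrite in_setD1 eq_sym => /andP [ik _].
  by rewrite !dfwith_out // !compA.
Qed.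

Lemma subbiprod_summand_closed (P : C -> Prop) (X : C) (p : forall i, hom X (Xs i)) e
    (S : {set 'I_n}) (W : C) (pS : forall i, hom W (Xs i)) eS :
  summand_closed P -> biprodn p e -> subbiprod S pS eS -> P X -> P W.
Proof.
move=> Psum Xe We PX.
have [W' [pT [eT W'e]]] := subbiprod_exists (~: S).
by have [] := Psum _ _ _ _ _ _ _ (subbiprod_complement (biprodn_subbiprod Xe) We W'e) PX.
Qed.

End SubBiproductExists.

Lemma exists_card_minimal (T : finType) (P : {set T} -> Prop) (S0 : {set T}) :
  P S0 -> exists S, P S /\ forall S' : {set T}, (#|S'| < #|S|)%N -> ~ P S'.
Proof.
move: {2}#|S0|.+1 (ltnSn #|S0|) => k; elim: k S0 => [//|k IH] S0 S0k PS0.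
case: (classic (exists S' : {set T}, (#|S'| < #|S0|)%N /\ P S')) => [[S' [S'S0 PS']]|].
  by apply: (IH S') => //; apply: leq_trans S'S0 _.
by move=> noS'; exists S0; split=> // S' S'S0 PS'; apply: noS'; exists S'.
Qed.

Section ApproximationModulo.
Variable C : PreAddCat.
Variables (Y : C -> Prop) (D I : C) (b : hom I D).
Variables (n : nat) (Xs : 'I_n -> C) (fs : forall i, hom (Xs i) D).

Definition approx_by_subfamily (S : {set 'I_n}) : Prop :=
  forall Y' : C, Y Y' -> forall g : hom Y' D,
    exists (hs : forall i, hom Y' (Xs i)) (s : hom Y' I),
      g = \sum_(i in S) fs i ∘ hs i + b ∘ s.

Section Summands.
Variables (S : {set 'I_n}) (W : C) (p : forall i, hom W (Xs i)) (e : forall i, hom (Xs i) W).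
Hypothesis We : subbiprod S p e.
Local Notation fW := (\sum_(k in S) fs k ∘ p k).

Lemma approx_by_subbiprod : approx_by_subfamily S ->
  forall Y' : C, Y Y' -> forall g : hom Y' D,
    exists (h : hom Y' W) (s : hom Y' I), g = fW ∘ h + b ∘ s.
Proof.
move=> approxS Y' Y'Y g; have [hs [s ->]] := approxS Y' Y'Y g.
by exists (\sum_(k in S) e k ∘ hs k), s; rewrite (subbiprod_sum_comp We) // setIid.
Qed.

(* The invertible entry lets the [i]-th summand be rewritten, through the
   [j]-th column of [1 - phi], in terms of the others and [b]. *)
Lemma approx_by_subfamily_setD1 (phi : hom W W) (s : hom W I) i j :
  approx_by_subfamily S -> fW ∘ phi = fW + b ∘ s -> i \in S ->
  isIso (p i ∘ (idm W - phi) ∘ e j) -> approx_by_subfamily (S :\ i).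
Proof.
move=> approxS fW_phi iS [t [_ ct]].
set c := fun k => p k ∘ (idm W - phi) ∘ e j.
move=> Y' Y'Y g; have [hs [s' g_hs]] := approxS Y' Y'Y g.
set u := t ∘ hs i.
have col : \sum_(k in S) fs k ∘ (c k ∘ u) = - (b ∘ (s ∘ e j ∘ u)).
  transitivity (fW ∘ (idm W - phi) ∘ e j ∘ u).
    by rewrite !comp_suml; apply: eq_bigr => k _; rewrite !compA.
  by rewrite compBr compm1 fW_phi opprD addrA subrr add0r !compNm !compA.
exists (fun k => hs k - c k ∘ u), (s' - s ∘ e j ∘ u).
have -> : \sum_(k in S :\ i) fs k ∘ (hs k - c k ∘ u) =
          \sum_(k in S) fs k ∘ (hs k - c k ∘ u).
  by rewrite [RHS](big_setD1 i) //= /u compA ct comp1m subrr compm0 add0r.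
rewrite g_hs (eq_bigr _ (fun k _ => compBr _ _ _)) sumrB col opprK compBr.
by rewrite addrACA subrr addr0.
Qed.

Lemma isIso_of_minimal_approx : (forall i, i \in S -> local_endo (Xs i)) ->
  approx_by_subfamily S ->
  (forall S' : {set 'I_n}, (#|S'| < #|S|)%N -> ~ approx_by_subfamily S') ->
  forall (phi : hom W W) (s : hom W I), fW ∘ phi = fW + b ∘ s -> isIso phi.
Proof.
move=> Xs_loc approxS minS phi s fW_phi.
rewrite -[phi](subKr (idm W)); apply: (isIso_idmB_rad_entries We) => i j iS jS.
apply: local_nonIso_rad; [exact: Xs_loc | exact: Xs_loc | move=> entry_iso].
apply: (minS (S :\ i)); first by rewrite (cardsD1 i S) iS add1n ltnSn.
exact: approx_by_subfamily_setD1 fW_phi iS entry_iso.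
Qed.

End Summands.
End ApproximationModulo.

Section CovariantFiniteness.
Variables (C : ExtriCat) (Y : C -> Prop).
Hypotheses (hKS : krull_schmidt C) (hYcf : contravariantly_finite Y)
  (hYext : ext_closed Y) (hYsum : summand_closed Y).

Lemma minimal_approx_modulo (D I : C) (b : hom I D) :
  exists (W : C) (f : hom W D), [/\ Y W,
    forall Y' : C, Y Y' -> forall g : hom Y' D,
      exists (h : hom Y' W) (s : hom Y' I), g = f ∘ h + b ∘ s &
    forall (phi : hom W W) (s : hom W I), f ∘ phi = f + b ∘ s -> isIso phi].
Proof.
have [Y0 [f0 [Y0Y f0_approx]]] := hYcf D.
have [n [Xs [p [e [Y0e Xs_loc]]]]] := hKS Y0.
pose fs i := f0 ∘ e i.
have approxT : approx_by_subfamily Y b fs [set: 'I_n].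
  move=> Y' Y'Y g; have [h ->] := f0_approx Y' g Y'Y.
  exists (fun i => p i ∘ h), 0; rewrite compm0 addr0.
  case: (biprodn_subbiprod Y0e) => _ _ sum_ep.
  rewrite -[f0]compm1 -sum_ep comp_sumr comp_suml.
  by apply: eq_bigr => i _; rewrite !compA.
have [S [approxS minS]] := exists_card_minimal approxT.
have [W [pW [eW We]]] := subbiprod_exists Xs S.
exists W, (\sum_(k in S) fs k ∘ pW k); split.
- exact: subbiprod_summand_closed hYsum Y0e We Y0Y.
- exact: approx_by_subbiprod We approxS.
- exact: isIso_of_minimal_approx We (fun i _ => Xs_loc i) approxS minS.
Qed.

Section Wakamatsu.
Variables (X I D : C) (delta : Ext D X) (a : hom X I) (b : hom I D).
Hypotheses (delta_ab : realizes delta a b) (I_inj : injective I).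
Variables (W : C) (f : hom W D).
Hypotheses (WY : Y W)
  (f_approx : forall Y' : C, Y Y' -> forall g : hom Y' D,
     exists (h : hom Y' W) (s : hom Y' I), g = f ∘ h + b ∘ s)
  (f_min : forall (phi : hom W W) (s : hom W I), f ∘ phi = f + b ∘ s -> isIso phi).
Variables (M : C) (x : hom X M) (q : hom M W).
Hypothesis d_xq : realizes (pull f delta) x q.
Local Notation d := (pull f delta).

Lemma ext_from_Y_pull (E : C) (th : Ext E X) : Y E -> exists k : hom E W, th = pull k d.
Proof.
move=> EY; have [g ->] := ext_factor_pull delta_ab (I_inj (push a th)).
have [k [s ->]] := f_approx EY g.
by exists k; rewrite pullDm !pull_comp (pull_deflation0 delta_ab) pull0 addr0.
Qed.

Lemma isIso_of_pull_fixed (phi : hom W W) : pull phi d = d -> isIso phi.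
Proof.
move=> phi_d; have [s f_phi] : exists s : hom W I, f ∘ phi - f = b ∘ s.
  by apply: (hom_factor_deflation delta_ab); rewrite pullBm pull_comp phi_d subrr.
by apply: (f_min (s := s)); rewrite -f_phi addrC subrK.
Qed.

Lemma push_inflation_ext_Y0 (Y' : C) (e0 : Ext Y' X) : Y Y' -> push x e0 = 0.
Proof.
by move=> Y'Y; have [k ->] := ext_from_Y_pull e0 Y'Y; rewrite push_pull (push_inflation0 d_xq) pull0.
Qed.

(* The octahedral axiom splices [d] and [eps]; minimality of [f] forces the
   resulting map [W -> E] to be a split mono, which kills [push q eps]. *)
Lemma push_deflation_ext_Y0 (Y' : C) (eps : Ext Y' M) : Y Y' -> push q eps = 0.
Proof.
move=> Y'Y; have [N [m [r eps_mr]]] := real_ex eps.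
have [E [_ [_ [th [u [v [_ qeps_uv u_th _ _]]]]]]] := ET4 d_xq eps_mr.
have [k th_k] := ext_from_Y_pull th (hYext qeps_uv WY Y'Y).
have [w [wku _]] : isIso (k ∘ u).
  by apply: isIso_of_pull_fixed; rewrite pull_comp -th_k u_th.
rewrite -[push q eps]push1 -wku compA push_comp (push_inflation0 qeps_uv).
exact: push0.
Qed.

Lemma cone_perp1_right : perp1_right Y M.
Proof.
move=> Y' Y'Y eps; have [e0 ->] := ext_factor_inflation d_xq (push_deflation_ext_Y0 eps Y'Y).
exact: push_inflation_ext_Y0.
Qed.

Lemma inflation_left_approx (X' : C) (g : hom X X') :
  perp1_right Y X' -> exists h : hom M X', g = h ∘ x.
Proof. by move=> X'perp; apply: (hom_factor_inflation d_xq); apply: X'perp. Qed.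

End Wakamatsu.

Lemma perp1_right_covariantly_finite (hinj : enough_injectives C) :
  covariantly_finite (perp1_right Y).
Proof.
move=> X; have [I [D [delta [a [b [delta_ab I_inj]]]]]] := hinj X.
have [W [f [WY f_approx f_min]]] := minimal_approx_modulo b.
have [M [x [q d_xq]]] := real_ex (pull f delta).
exists M, x; split.
- exact: (cone_perp1_right delta_ab I_inj WY f_approx f_min d_xq).
- by move=> X' g; apply: (inflation_left_approx WY d_xq).
Qed.

End CovariantFiniteness.

Theorem lemma3p2 (C : ExtriCat)
    (hKS : krull_schmidt C)
    (hproj : enough_projectives C) (hinj : enough_injectives C)
    (Y : C -> Prop)
    (hYiso : iso_closed Y) (hYadd : additive_sub Y)
    (hYcf : contravariantly_finite Y)
    (hYext : ext_closed Y) (hYsum : summand_closed Y) :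
  covariantly_finite (perp1_right Y) /\
  ext_closed (perp1_right Y) /\
  summand_closed (perp1_right Y).
Proof.
split; first exact: perp1_right_covariantly_finite.
by split; [exact: perp1_right_ext_closed | exact: perp1_right_summand_closed].
Qed.
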